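(* Suppose $\mathcal C$ is a Distribution Problem satisfying Thin Individual Indifference. (a) If $\mathcal D$ is a quota rule with quota $q<n$, then for any selections $\hat\phi_1,\dots,\hat\phi_T$ of $\Phi^{\mathrm{or}}_{\mathcal D}$: if $T\ge\lceil n/(n-q)\rceil$ then $[\hat\phi_1\circ\cdots\circ\hat\phi_T](x)\in X_A^*$ for all $x\in X$. (b) If $\mathcal D$ is a veto-proof voting rule, then for any selections $\hat\phi_1,\dots,\hat\phi_T$ of $\Phi^{\mathrm{or}}_{\mathcal D}$: if $T\ge n$ then $[\hat\phi_1\circ\cdots\circ\hat\phi_T](x)\in X_A^*$ for all $x\in X$.
   Context: Collective choice problem $\mathcal C$: voters $N=\{1,\dots,n\}$, agenda setter $A$, compact metrizable policy space $X$, continuous preferences $\succsim_i$ with continuous utilities $u_i$; $X_A^*=\arg\max_X u_A$. Distribution Problem: for every $x$ and player $i$, (Scarcity) if $u_i(x)<\max_X u_i$ then either some $j\ne i$ has $u_j(x)>\min_X u_j$ or some $y$ has $u_k(y)>u_k(x)$ for all players $k$; (Transferability) if $u_i(x)>\min_X u_i$ then some $y$ has $u_j(y)>u_j(x)$ for all players $j\ne i$. Thin Individual Indifference: for every player $i$ and $x$, $\{y: y\sim_i x\}\setminus\{x\}$ has empty interior. Voting rule: collection $\mathcal D\subseteq 2^N$ of winning coalitions; quota rule with quota $q$: $\mathcal D=\{D\subseteq N:|D|\ge q\}$; veto-proof: for each voter $i$ some $D\in\mathcal D$ has $D\subseteq N\setminus\{i\}$. $M^{w}_{\mathcal D}(x)=\{y:\exists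 D\in\mathcal D,\ y\succsim_i x\ \forall i\in D\}$, $M^{s}_{\mathcal D}(x)=\{y:\exists D\in\mathcal D,\ y\succ_i x\ \forall i\in D\}$, $M^{as}_{\mathcal D}(x)=\mathrm{cl}[M^{s}_{\mathcal D}(x)]\cup\{x\}$, $V_A^{as}(x\mid\mathcal D)=\max_{y\in M^{as}_{\mathcal D}(x)}u_A(y)$, $\Phi^{\mathrm{or}}_{\mathcal D}(x)=\{y\in M^{w}_{\mathcal D}(x): u_A(y)\ge V_A^{as}(x\mid\mathcal D)\}$. A selection of $\Phi^{\mathrm{or}}_{\mathcal D}$ is a map $\hat\phi:X\to X$ with $\hat\phi(x)\in\Phi^{\mathrm{or}}_{\mathcal D}(x)$ for all $x$. *)

From HB Require Import structures.
From mathcomp Require Import all_boot all_order all_algebra.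
From mathcomp Require Import all_classical all_reals all_analysis.
Set Implicit Arguments. Unset Strict Implicit. Unset Printing Implicit Defensive.
Import Order.TTheory GRing.Theory Num.Theory.
Local Open Scope classical_set_scope.
Local Open Scope ring_scope.

Section Defs.
Variables (R : realType) (X : topologicalType) (n : nat).

(* Players: voters [Some i] (i : 'I_n) and the agenda setter [None]. *)
Definition pu (u : 'I_n -> X -> R) (uA : X -> R) (p : option 'I_n) : X -> R :=
  match p with Some i => u i | None => uA end.

(* u x < max_X u, and u x > min_X u (max/min attained by compactness). *)
Definition below_max (f : X -> R) (x : X) : Prop := exists y, f x < f y.
Definition above_min (f : X -> R) (x : X) : Prop := exists y, f y < f x.

Definition distribution_problem (u : 'I_n -> X -> R) (uA : X -> R) : Prop :=
  forall (x : X) (i : option 'I_n),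
    (below_max (pu u uA i) x ->
       (exists j, j <> i /\ above_min (pu u uA j) x) \/
       (exists y, forall k, pu u uA k x < pu u uA k y)) /\
    (above_min (pu u uA i) x ->
       exists y, forall j, j <> i -> pu u uA j x < pu u uA j y).

Definition thin_indifference (u : 'I_n -> X -> R) (uA : X -> R) : Prop :=
  forall (i : option 'I_n) (x : X),
    interior ([set y | pu u uA i y = pu u uA i x] `\ x) = set0.

Definition argmaxA (uA : X -> R) : set X := [set x | forall y, uA y <= uA x].

Definition quota_rule (q : nat) : set {set 'I_n} := [set S | (q <= #|S|)%N].

Definition veto_proof (D : set {set 'I_n}) : Prop :=
  forall i : 'I_n, exists S, D S /\ S \subset [set~ i].

(* y ≿_i x  iff  u_i x <= u_i y *)
Definition Mw (u : 'I_n -> X -> R) (D : set {set 'I_n}) (x : X) : set X :=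
  [set y | exists S, D S /\ forall i, i \in S -> u i x <= u i y].
Definition Ms (u : 'I_n -> X -> R) (D : set {set 'I_n}) (x : X) : set X :=
  [set y | exists S, D S /\ forall i, i \in S -> u i x < u i y].
Definition Mas (u : 'I_n -> X -> R) (D : set {set 'I_n}) (x : X) : set X :=
  closure (Ms u D x) `|` [set x].

Definition Phi_or (u : 'I_n -> X -> R) (uA : X -> R) (D : set {set 'I_n})
  (x : X) : set X :=
  [set y | Mw u D x y /\ forall z, Mas u D x z -> uA z <= uA y].

Definition is_selection (u : 'I_n -> X -> R) (uA : X -> R)
  (D : set {set 'I_n}) (phi : X -> X) : Prop :=
  forall x, Phi_or u uA D x (phi x).

(* [phi_1 o ... o phi_T] for fs = [:: phi_1; ...; phi_T] *)
Definition compose_all (fs : seq (X -> X)) : X -> X := foldr (fun f g => f \o g) id fs.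

End Defs.

From HB Require Import structures.
From mathcomp Require Import all_boot all_order all_algebra zify.
From mathcomp Require Import all_classical all_reals all_analysis.
Import Order.TTheory GRing.Theory Num.Theory numFieldTopology.Exports.
Local Open Scope classical_set_scope.
Local Open Scope ring_scope.
Set Implicit Arguments. Unset Strict Implicit.

(* Let P(y) be the set of voters strictly above their minimum utility at y,
   and suppose y is chosen from Phi^or(x) without being optimal for the agenda
   setter.  Then P(y) is nonempty (scarcity for the setter); no winning
   coalition omitting a voter j of P(y) weakly prefers y to x, since
   transferability away from j would give a point that this coalition and the
   setter strictly prefer; and P(y) is contained in P(x), by thin indifference.
   Hence P(y) and the voters outside P(x) all weakly prefer y to x.  Counting
   these voters, |P| drops by at least n - q at each round under a quota rule,
   and by at least 1 under a veto-proof rule.  As |P| <= n and optimality for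
   the setter persists along Phi^or, the stated number of rounds suffices. *)

Lemma leq_card_setC_add (T : finType) (A B W : {set T}) :
  A \subset B -> A \subset W -> ~: B \subset W -> (#|A| + #|~: B| <= #|W|)%N.
Proof.
move=> AB AW BcW; rewrite -(cardsID B W) leq_add ?subset_leq_card //.
  by rewrite finset.subsetI AW AB.
by rewrite finset.setDE finset.subsetI BcW subxx.
Qed.

Lemma ceil_divn_le (R : archiRealFieldType) (m k s : nat) : (0 < k)%N ->
  (Num.ceil ((m%:R : R) / k%:R) <= s%:R)%R -> (m <= s * k)%N.
Proof.
by move=> k_gt0; rewrite natz ceil_le_int -pmulrn ler_pdivrMr ?ltr0n // -natrM ler_nat.
Qed.

Section AgendaSetting.
Variables (R : realType) (X : topologicalType) (n : nat).
Variables (u : 'I_n -> X -> R) (uA : X -> R).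
Implicit Types (x y w : X) (S : {set 'I_n}).
Hypotheses (dp : distribution_problem u uA) (thin : thin_indifference u uA).
Hypotheses (u_cont : forall i, continuous (u i)) (uA_cont : continuous uA).

Lemma not_argmaxA x : ~ argmaxA uA x -> below_max uA x.
Proof.
move=> xNmax; apply: contrapT => xNbelow; apply: xNmax => y.
by rewrite leNgt; apply/negP => xy; apply: xNbelow; exists y.
Qed.

Lemma not_above_min (f : X -> R) x : ~ above_min f x -> forall y, f x <= f y.
Proof.
by move=> xNabove y; rewrite leNgt; apply/negP => yx; apply: xNabove; exists y.
Qed.

Definition above_min_set y : {set 'I_n} := [set i | `[< above_min (u i) y >]].

Lemma above_min_setP y i : reflect (above_min (u i) y) (i \in above_min_set y).
Proof. by rewrite inE; apply: asboolP. Qed.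

Definition weak_supporters x y : {set 'I_n} := [set i | u i x <= u i y].

Lemma setC_above_min_set_sub x y : ~: above_min_set x \subset weak_supporters x y.
Proof.
apply/fintype.subsetP => i; rewrite inE => /above_min_setP xNabove.
by rewrite inE; apply: not_above_min.
Qed.

Section Rule.
Variable D : set {set 'I_n}.

Lemma Phi_or_Ms_le x y w : Phi_or u uA D x y -> Ms u D x w -> uA w <= uA y.
Proof. by case=> _ le_y /subset_closure Msw; apply: le_y; left. Qed.

Lemma Phi_or_self_le x y : Phi_or u uA D x y -> uA x <= uA y.
Proof. by case=> _; apply; right. Qed.

Lemma argmaxA_Phi_or x y : Phi_or u uA D x y -> argmaxA uA x -> argmaxA uA y.
Proof. by move=> /Phi_or_self_le xy xmax z; apply: le_trans xy. Qed.

Lemma Mw_Ms_improvement x y w : Mw u D x y ->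
  (forall i, u i x < u i w \/ u i y < u i w) -> Ms u D x w.
Proof.
case=> S [DS le_xy] lt_w; exists S; split=> // i /le_xy xy.
by case: (lt_w i) => // yw; apply: le_lt_trans xy yw.
Qed.

Lemma Phi_or_exists_above_min x y : Phi_or u uA D x y -> ~ argmaxA uA y ->
  exists j, above_min (u j) y.
Proof.
move=> Phi /not_argmaxA yNmax.
case: ((dp y None).1 yNmax) => [[[j|] [//= _ jy]] | [w lt_w]]; first by exists j.
suff: uA w <= uA y by rewrite leNgt (lt_w None).
apply: (Phi_or_Ms_le Phi); apply: (Mw_Ms_improvement Phi.1) => i.
by right; apply: (lt_w (Some i)).
Qed.

Lemma Phi_or_no_coalition_without x y j S : Phi_or u uA D x y ->
  above_min (u j) y -> D S -> j \notin S -> ~ S \subset weak_supporters x y.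
Proof.
move=> Phi jy DS jNS /fintype.subsetP S_weak.
have [w lt_w] := (dp y (Some j)).2 jy.
suff: uA w <= uA y by rewrite leNgt (lt_w None).
apply: (Phi_or_Ms_le Phi); exists S; split=> // i iS.
have := S_weak i iS; rewrite inE => /le_lt_trans; apply; apply: (lt_w (Some i)).
by case=> eq_ij; rewrite -eq_ij iS in jNS.
Qed.

Lemma above_min_set_sub_weak x y : Phi_or u uA D x y ->
  above_min_set y \subset weak_supporters x y.
Proof.
move=> Phi; have [S [DS le_xy]] := Phi.1.
apply/fintype.subsetP => j /above_min_setP jy; rewrite inE.
have [/le_xy //|jNS] := boolP (j \in S).
exfalso; apply: (Phi_or_no_coalition_without Phi jy DS jNS).
by apply/fintype.subsetP => i iS; rewrite inE le_xy.
Qed.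

Lemma card_above_min_set_gt0 x y : Phi_or u uA D x y -> ~ argmaxA uA y ->
  (0 < #|above_min_set y|)%N.
Proof.
move=> Phi yNmax; have [j jy] := Phi_or_exists_above_min Phi yNmax.
by apply/card_gt0P; exists j; apply/above_min_setP.
Qed.

(* If voter i were at their minimum at x, every point improving on y for the
   setter and all other voters would have to leave u_i at that minimum (or it
   would lie in M^s(x)); these points form a nonempty open set avoiding x. *)
Lemma Phi_or_above_min x y i : Phi_or u uA D x y ->
  above_min (u i) y -> above_min (u i) x.
Proof.
move=> Phi iy; apply: contrapT => /not_above_min x_min.
have [z lt_z] := (dp y (Some i)).2 iy.
pose U := [set w | uA y < uA w /\ forall k, k != i -> u k y < u k w].
have Uz : U z.
  split=> [|k ki]; first exact: (lt_z None).
  by apply: (lt_z (Some k)) => -[/eqP]; rewrite (negPf ki).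
have U_nbhs : nbhs z U.
  near=> w; split; first by near: w; apply: cvgr_gt _ (@uA_cont z) _ Uz.1.
  near: w; apply: (filter_forall (f := fun k w => k != i -> u k y < u k w)) => k.
  have [->|ki] := eqVneq k i; first exact: nearW.
  by apply: filterS (cvgr_gt _ (@u_cont k z) _ (Uz.2 k ki)) => w ukw _.
have U_level : U `<=` [set w | u i w = u i x] `\ x.
  move=> w [yw kw]; split=> [|/= wx]; last by move: yw; rewrite wx ltNge Phi_or_self_le.
  apply/eqP; rewrite eq_le x_min andbT leNgt; apply/negP => xw.
  suff: uA w <= uA y by rewrite leNgt yw.
  apply: (Phi_or_Ms_le Phi); apply: (Mw_Ms_improvement Phi.1) => k.
  by have [->|ki] := eqVneq k i; [left | right; apply: kw].
have := thin (Some i) x; rewrite /= => no_interior.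
suff: ([set w | u i w = u i x] `\ x)° z by rewrite no_interior.
exact: filterS U_level U_nbhs.
Unshelve. all: by end_near.
Qed.

Lemma above_min_set_Phi_or x y : Phi_or u uA D x y ->
  above_min_set y \subset above_min_set x.
Proof.
move=> Phi; apply/fintype.subsetP => i /above_min_setP iy.
by apply/above_min_setP; apply: Phi_or_above_min Phi iy.
Qed.

Lemma argmaxA_compose_all_or_descent (d : nat) (fs : seq (X -> X)) :
  (forall x y, Phi_or u uA D x y -> ~ argmaxA uA y ->
     (#|above_min_set y| + d <= #|above_min_set x|)%N) ->
  (forall k, (k < size fs)%N -> is_selection u uA D (nth id fs k)) ->
  forall x, argmaxA uA (compose_all fs x) \/
            (#|above_min_set (compose_all fs x)| + size fs * d <= n)%N.
Proof.
move=> descent; elim: fs => [|f fs IH] sel x.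
  by right; rewrite mul0n addn0 -[n in (_ <= n)%N]card_ord max_card.
have Phi : Phi_or u uA D (compose_all fs x) (compose_all (f :: fs) x).
  exact: (sel 0%N).
have [xmax|bound] := IH (fun k => sel k.+1) x.
  by left; apply: argmaxA_Phi_or Phi xmax.
have [ymax|yNmax] := pselect (argmaxA uA (compose_all (f :: fs) x)); first by left.
by right; have := descent _ _ Phi yNmax; rewrite [size _]/= mulSn; lia.
Qed.

Lemma argmaxA_compose_all (d : nat) (fs : seq (X -> X)) :
  (forall x y, Phi_or u uA D x y -> ~ argmaxA uA y ->
     (#|above_min_set y| + d <= #|above_min_set x|)%N) ->
  (0 < n)%N ->
  (forall k, (k < size fs)%N -> is_selection u uA D (nth id fs k)) ->
  (n <= size fs * d)%N ->
  forall x, argmaxA uA (compose_all fs x).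
Proof.
move=> descent n_gt0 sel n_le x.
have [//|bound] := argmaxA_compose_all_or_descent descent sel x.
case: fs sel n_le bound => [|f fs] sel n_le bound; first by rewrite mul0n in n_le; lia.
apply: contrapT => yNmax.
have := card_above_min_set_gt0 (sel 0%N isT (compose_all fs x)) yNmax.
by move: bound n_le; rewrite /=; lia.
Qed.

End Rule.

Lemma quota_rule_descent q x y : Phi_or u uA (quota_rule q) x y -> ~ argmaxA uA y ->
  (#|above_min_set y| + (n - q) <= #|above_min_set x|)%N.
Proof.
move=> Phi yNmax.
have [j jPy] := card_gt0P (card_above_min_set_gt0 Phi yNmax).
have /above_min_setP jy := jPy.
have W_lt : (#|weak_supporters x y :\ j| < q)%N.
  rewrite ltnNge; apply/negP => Wq.
  by apply: (Phi_or_no_coalition_without Phi jy Wq); rewrite ?setD11 ?subsetDl.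
have := cardsD1 j (weak_supporters x y).
rewrite (fintype.subsetP (above_min_set_sub_weak Phi) j jPy) add1n.
have Py_sub_Px := above_min_set_Phi_or Phi.
have := leq_card_setC_add Py_sub_Px (above_min_set_sub_weak Phi)
  (setC_above_min_set_sub x y).
have := subset_leq_card Py_sub_Px.
have := cardsC (above_min_set x); rewrite card_ord; lia.
Qed.

Lemma veto_proof_descent D x y : veto_proof D ->
  Phi_or u uA D x y -> ~ argmaxA uA y ->
  (#|above_min_set y| + 1 <= #|above_min_set x|)%N.
Proof.
move=> veto Phi yNmax; set W := weak_supporters x y.
have [j jPy] := card_gt0P (card_above_min_set_gt0 Phi yNmax).
have [S [DS S_j]] := veto j.
have /subsetPn[k kS kNW] : ~~ (S \subset W).
  apply/negP; move/above_min_setP: (jPy) => jy.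
  apply: (Phi_or_no_coalition_without Phi jy DS).
  by apply/negP => /(fintype.subsetP S_j); rewrite inE; apply.
have kx : k \in above_min_set x.
  by move: kNW; rewrite inE -ltNge => yx; apply/above_min_setP; exists y.
have kNPy : k \notin above_min_set y.
  by apply: contra kNW; apply: (fintype.subsetP (above_min_set_sub_weak Phi)).
rewrite (cardsD1 k (above_min_set x)) kx add1n addn1 ltnS.
apply: subset_leq_card; rewrite subsetD1 kNPy andbT.
exact: (above_min_set_Phi_or Phi).
Qed.

End AgendaSetting.

Theorem lemma10 (R : realType) (X : metricType R) (n : nat)
  (u : 'I_n -> X -> R) (uA : X -> R) :
  (0 < n)%N ->
  compact [set: X] ->
  (forall i, continuous (u i)) -> continuous uA ->
  distribution_problem u uA -> thin_indifference u uA ->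
  (* (a) quota rules *)
  (forall (q : nat), (q < n)%N ->
     forall fs : seq (X -> X),
       (forall k, (k < size fs)%N -> is_selection u uA (@quota_rule n q) (nth id fs k)) ->
       (Num.ceil ((n%:R : R) / (n - q)%:R) <= (size fs)%:R)%R ->
       forall x, argmaxA uA (compose_all fs x)) /\
  (* (b) veto-proof rules *)
  (forall D : set {set 'I_n}, veto_proof D ->
     forall fs : seq (X -> X),
       (forall k, (k < size fs)%N -> is_selection u uA D (nth id fs k)) ->
       (n <= size fs)%N ->
       forall x, argmaxA uA (compose_all fs x)).
Proof.
move=> n_gt0 _ u_cont uA_cont dp thin; split.
- move=> q lt_qn fs sel ceil_le.
  apply: (argmaxA_compose_all dp (d := (n - q)%N) _ n_gt0 sel).
    exact: quota_rule_descent.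
  by apply: ceil_divn_le ceil_le; rewrite subn_gt0.
- move=> D veto fs sel le_n.
  apply: (argmaxA_compose_all dp (d := 1%N) _ n_gt0 sel); last by rewrite muln1.
  by move=> x y; apply: veto_proof_descent.
Qed.
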